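(* Let $\mathbf{t}:\mathcal{D}\to\mathcal{T}$ be a closed monoidal refinement system. Then, whenever the pullbacks and pushforwards involved exist, there are vertical isomorphisms: (a) for $c:A\to A'$, $d:B\to B'$, $P\sqsubset A$, $Q\sqsubset B$: $(c\otimes d)_!(P\otimes Q)\cong c_!P\otimes d_!Q$; (b) for $c:A\to A'$, $d:C'\to C$, $P\sqsubset A$, $R\sqsubset C$: $(c_!P)\backslash(d^*R)\cong (c\backslash d)^*(P\backslash R)$, where $c\backslash d:A'\backslash C'\to A\backslash C$ is the action of the left residual functor $\backslash:\mathcal T^{op}\times\mathcal T\to\mathcal T$; (c) for $c:B\to B'$, $d:C'\to C$, $Q\sqsubset B$, $R\sqsubset C$: $(d^*R)/(c_!Q)\cong (d/c)^*(R/Q)$, where $d/c:C'/B'\to C/B$ is the action of the right residual functor $/:\mathcal T\times\mathcal T^{op}\to\mathcal T$.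
   Context: A refinement system is a functor $\mathbf{t}:\mathcal{D}\to\mathcal{T}$; composition is written diagrammatically ($c;d$ = first $c$ then $d$). Write $P\sqsubset A$ if $\mathbf t(P)=A$; a derivation of $P\Rightarrow_c Q$ ($c:A\to B$, $P\sqsubset A$, $Q\sqsubset B$) is a morphism $\alpha:P\to Q$ with $\mathbf t(\alpha)=c$. Refinements $P,Q\sqsubset A$ are vertically isomorphic ($P\cong Q$) if there is an isomorphism $P\to Q$ mapped to $\mathrm{id}_A$. A pullback of $Q\sqsubset B$ along $c:A\to B$ is $c^*Q\sqsubset A$ with a derivation $\lambda$ of $c^*Q\Rightarrow_cQ$ such that for all $P\sqsubset X$, $d:X\to A$, post-composition with $\lambda$ is a bijection from derivations of $P\Rightarrow_d c^*Q$ to derivations of $P\Rightarrow_{d;c}Q$. A pushforward of $P\sqsubset A$ along $c:A\to B$ is $c_!P\sqsubset B$ with a derivation $\kappa$ of $P\Rightarrow_c c_!P$ such that for all $Q\sqsubset Y$, $d:B\to Y$, pre-composition with $\kappa$ is a bijection from derivations of $c_!P\Rightarrow_dQ$ to derivations of $P\Rightarrow_{c;d}Q$. A monoidal category is closed if it has a left residual $X\backslash Z$ and right residual $Z/Y$ with natural bijections $\mathcal C(Y,X\backslash Z)\cong\mathcal C(X\otimes Y,Z)\cong\mathcal C(X,Z/Y)$. A closed monoidal refinement system is a functor $\mathbf t:\mathcal D\to\mathcal T$ between closed monoidal categories which strictly preserves tensor products, unit, and both residuals (together with their structure maps), so that $P\otimes Q\sqsubset A\otimes B$, $P\backslash R\sqsubset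 A\backslash C$, $R/Q\sqsubset C/B$ whenever $P\sqsubset A$, $Q\sqsubset B$, $R\sqsubset C$. *)

(* a small self-contained development of categories,
   closed monoidal categories and closed monoidal refinement systems.
   Composition is diagrammatic: [comp f g] = "first f then g" = f;g. *)
Set Implicit Arguments.
Unset Strict Implicit.

Record Cat := {
  ob :> Type;
  hom : ob -> ob -> Type;
  idc : forall A, hom A A;
  comp : forall A B C, hom A B -> hom B C -> hom A C;
  comp_id_l : forall A B (f : hom A B), comp (idc A) f = f;
  comp_id_r : forall A B (f : hom A B), comp f (idc B) = f;
  comp_assoc : forall A B C D (f : hom A B) (g : hom B C) (h : hom C D),
      comp (comp f g) h = comp f (comp g h)
}.
Arguments hom {c} _ _.
Arguments idc {c} _.
Arguments comp {c A B C} _ _.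

Record Functor (C D : Cat) := {
  fobj :> C -> D;
  fmap : forall A B, @hom C A B -> @hom D (fobj A) (fobj B);
  fmap_id : forall A, fmap (idc A) = idc (fobj A);
  fmap_comp : forall A B E (f : @hom C A B) (g : @hom C B E),
      fmap (comp f g) = comp (fmap f) (fmap g)
}.
Arguments fobj {C D} _ _.
Arguments fmap {C D} _ {A B} _.

Definition HomEq {C : Cat} {A B A' B' : C} (f : hom A B) (g : hom A' B') : Prop :=
  existT (fun p : C * C => hom (fst p) (snd p)) (A, B) f
  = existT (fun p : C * C => hom (fst p) (snd p)) (A', B') g.

Record Monoidal (C : Cat) := {
  tens : C -> C -> C;
  tensm : forall A A' B B', hom A A' -> hom B B' -> hom (tens A B) (tens A' B');
  tensm_id : forall A B, tensm (idc A) (idc B) = idc (tens A B);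
  tensm_comp : forall A A' A'' B B' B'' (f : hom A A') (f' : hom A' A'')
      (g : hom B B') (g' : hom B' B''),
      tensm (comp f f') (comp g g') = comp (tensm f g) (tensm f' g');
  munit : C;
  assoc : forall A B E, hom (tens (tens A B) E) (tens A (tens B E));
  assoc_inv : forall A B E, hom (tens A (tens B E)) (tens (tens A B) E);
  assoc_iso1 : forall A B E, comp (assoc A B E) (assoc_inv A B E) = idc _;
  assoc_iso2 : forall A B E, comp (assoc_inv A B E) (assoc A B E) = idc _;
  assoc_nat : forall A A' B B' E E' (f : hom A A') (g : hom B B') (h : hom E E'),
      comp (tensm (tensm f g) h) (assoc A' B' E')
      = comp (assoc A B E) (tensm f (tensm g h));
  lunit : forall A, hom (tens munit A) A;
  lunit_inv : forall A, hom A (tens munit A);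
  lunit_iso1 : forall A, comp (lunit A) (lunit_inv A) = idc _;
  lunit_iso2 : forall A, comp (lunit_inv A) (lunit A) = idc _;
  lunit_nat : forall A A' (f : hom A A'),
      comp (tensm (idc munit) f) (lunit A') = comp (lunit A) f;
  runit : forall A, hom (tens A munit) A;
  runit_inv : forall A, hom A (tens A munit);
  runit_iso1 : forall A, comp (runit A) (runit_inv A) = idc _;
  runit_iso2 : forall A, comp (runit_inv A) (runit A) = idc _;
  runit_nat : forall A A' (f : hom A A'),
      comp (tensm f (idc munit)) (runit A') = comp (runit A) f;
  pentagon : forall A B E F,
      comp (assoc (tens A B) E F) (assoc A B (tens E F))
      = comp (tensm (assoc A B E) (idc F))
             (comp (assoc A (tens B E) F) (tensm (idc A) (assoc B E F)));
  triangle : forall A B,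
      comp (assoc A munit B) (tensm (idc A) (lunit B))
      = tensm (runit A) (idc B)
}.
Arguments tens {C} _ _ _.
Arguments tensm {C} _ {A A' B B'} _ _.
Arguments munit {C} _.
Arguments assoc {C} _ _ _ _.
Arguments assoc_inv {C} _ _ _ _.
Arguments lunit {C} _ _.
Arguments lunit_inv {C} _ _.
Arguments runit {C} _ _.
Arguments runit_inv {C} _ _.

(* ---------- Closed structure ----------
   lres X Z  = X \ Z   (left residual),  hom Y (X\Z) ~ hom (X (x) Y) Z
   rres Z Y  = Z / Y   (right residual), hom X (Z/Y) ~ hom (X (x) Y) Z
   lresm f k : X\Z -> X'\Z'  for f : X' -> X, k : Z -> Z'  (functor T^op x T -> T)
   rresm k g : Z/Y -> Z'/Y'  for k : Z -> Z', g : Y' -> Y  (functor T x T^op -> T) *)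
Record Closed (C : Cat) (M : Monoidal C) := {
  lres : C -> C -> C;
  lresm : forall X X' Z Z', hom X' X -> hom Z Z' -> hom (lres X Z) (lres X' Z');
  lresm_id : forall X Z, lresm (idc X) (idc Z) = idc (lres X Z);
  lresm_comp : forall X X' X'' Z Z' Z'' (f : hom X' X) (f' : hom X'' X')
      (k : hom Z Z') (k' : hom Z' Z''),
      lresm (comp f' f) (comp k k') = comp (lresm f k) (lresm f' k');
  lcurry : forall X Y Z, hom (tens M X Y) Z -> hom Y (lres X Z);
  luncurry : forall X Y Z, hom Y (lres X Z) -> hom (tens M X Y) Z;
  luncurry_lcurry : forall X Y Z (h : hom (tens M X Y) Z), luncurry (lcurry h) = h;
  lcurry_luncurry : forall X Y Z (g : hom Y (lres X Z)), lcurry (luncurry g) = g;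
  lcurry_nat : forall X X' Y Y' Z Z' (f : hom X' X) (g : hom Y' Y)
      (h : hom (tens M X Y) Z) (k : hom Z Z'),
      lcurry (comp (tensm M f g) (comp h k)) = comp g (comp (lcurry h) (lresm f k));
  rres : C -> C -> C;
  rresm : forall Z Z' Y Y', hom Z Z' -> hom Y' Y -> hom (rres Z Y) (rres Z' Y');
  rresm_id : forall Z Y, rresm (idc Z) (idc Y) = idc (rres Z Y);
  rresm_comp : forall Z Z' Z'' Y Y' Y'' (k : hom Z Z') (k' : hom Z' Z'')
      (g : hom Y' Y) (g' : hom Y'' Y'),
      rresm (comp k k') (comp g' g) = comp (rresm k g) (rresm k' g');
  rcurry : forall X Y Z, hom (tens M X Y) Z -> hom X (rres Z Y);
  runcurry : forall X Y Z, hom X (rres Z Y) -> hom (tens M X Y) Z;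
  runcurry_rcurry : forall X Y Z (h : hom (tens M X Y) Z), runcurry (rcurry h) = h;
  rcurry_runcurry : forall X Y Z (g : hom X (rres Z Y)), rcurry (runcurry g) = g;
  rcurry_nat : forall X X' Y Y' Z Z' (f : hom X' X) (g : hom Y' Y)
      (h : hom (tens M X Y) Z) (k : hom Z Z'),
      rcurry (comp (tensm M f g) (comp h k)) = comp f (comp (rcurry h) (rresm k g))
}.
Arguments lres {C M} _ _ _.
Arguments lresm {C M} _ {X X' Z Z'} _ _.
Arguments lcurry {C M} _ {X Y Z} _.
Arguments luncurry {C M} _ {X Y Z} _.
Arguments rres {C M} _ _ _.
Arguments rresm {C M} _ {Z Z' Y Y'} _ _.
Arguments rcurry {C M} _ {X Y Z} _.
Arguments runcurry {C M} _ {X Y Z} _.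

Definition lev {C : Cat} {M : Monoidal C} (K : Closed M) (X Z : C)
  : hom (tens M X (lres K X Z)) Z := luncurry K (idc (lres K X Z)).
Definition lcoev {C : Cat} {M : Monoidal C} (K : Closed M) (X Y : C)
  : hom Y (lres K X (tens M X Y)) := lcurry K (idc (tens M X Y)).
Definition rev {C : Cat} {M : Monoidal C} (K : Closed M) (Z Y : C)
  : hom (tens M (rres K Z Y) Y) Z := runcurry K (idc (rres K Z Y)).
Definition rcoev {C : Cat} {M : Monoidal C} (K : Closed M) (X Y : C)
  : hom X (rres K (tens M X Y) Y) := rcurry K (idc (tens M X Y)).

Record CMRS := {
  cD : Cat;
  cT : Cat;
  mD : Monoidal cD;
  mT : Monoidal cT;
  kD : Closed mD;
  kT : Closed mT;
  rt : Functor cD cT;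
  t_tens : forall P Q, rt (tens mD P Q) = tens mT (rt P) (rt Q);
  t_tensm : forall P P' Q Q' (a : hom P P') (b : hom Q Q'),
      HomEq (fmap rt (tensm mD a b)) (tensm mT (fmap rt a) (fmap rt b));
  t_unit : rt (munit mD) = munit mT;
  t_assoc : forall P Q R,
      HomEq (fmap rt (assoc mD P Q R)) (assoc mT (rt P) (rt Q) (rt R));
  t_assoc_inv : forall P Q R,
      HomEq (fmap rt (assoc_inv mD P Q R)) (assoc_inv mT (rt P) (rt Q) (rt R));
  t_lunit : forall P, HomEq (fmap rt (lunit mD P)) (lunit mT (rt P));
  t_lunit_inv : forall P, HomEq (fmap rt (lunit_inv mD P)) (lunit_inv mT (rt P));
  t_runit : forall P, HomEq (fmap rt (runit mD P)) (runit mT (rt P));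
  t_runit_inv : forall P, HomEq (fmap rt (runit_inv mD P)) (runit_inv mT (rt P));
  t_lres : forall P R, rt (lres kD P R) = lres kT (rt P) (rt R);
  t_lresm : forall P P' R R' (a : hom P' P) (b : hom R R'),
      HomEq (fmap rt (lresm kD a b)) (lresm kT (fmap rt a) (fmap rt b));
  t_lev : forall P R, HomEq (fmap rt (lev kD P R)) (lev kT (rt P) (rt R));
  t_lcoev : forall P Q, HomEq (fmap rt (lcoev kD P Q)) (lcoev kT (rt P) (rt Q));
  t_rres : forall R Q, rt (rres kD R Q) = rres kT (rt R) (rt Q);
  t_rresm : forall R R' Q Q' (a : hom R R') (b : hom Q' Q),
      HomEq (fmap rt (rresm kD a b)) (rresm kT (fmap rt a) (fmap rt b));
  t_rev : forall R Q, HomEq (fmap rt (rev kD R Q)) (rev kT (rt R) (rt Q));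
  t_rcoev : forall P Q, HomEq (fmap rt (rcoev kD P Q)) (rcoev kT (rt P) (rt Q))
}.

Section Refinement.
Variable S : CMRS.

Definition refines (P : cD S) (A : cT S) : Prop := rt S P = A.

Definition Over {P Q : cD S} (alpha : hom P Q) {A B : cT S} (c : hom A B) : Prop :=
  HomEq (fmap (rt S) alpha) c.

Definition VIso (P Q : cD S) : Prop :=
  exists (f : hom P Q) (g : hom Q P),
    comp f g = idc P /\ comp g f = idc Q /\ Over f (idc (rt S P)).

Definition IsPullback {A B : cT S} (c : hom A B) (Q R : cD S) (lam : hom R Q) : Prop :=
  refines Q B /\ refines R A /\ Over lam c /\
  forall (X : cT S) (P : cD S) (d : hom X A), refines P X ->
    forall beta : hom P Q, Over beta (comp d c) ->
      exists! alpha : hom P R, Over alpha d /\ comp alpha lam = beta.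

Definition IsPushforward {A B : cT S} (c : hom A B) (P R : cD S) (kap : hom P R) : Prop :=
  refines P A /\ refines R B /\ Over kap c /\
  forall (Y : cT S) (Q : cD S) (d : hom B Y), refines Q Y ->
    forall beta : hom P Q, Over beta (comp c d) ->
      exists! alpha : hom R Q, Over alpha d /\ comp kap alpha = beta.

End Refinement.

Arguments refines {S} P A.
Arguments Over {S P Q} alpha {A B} c.
Arguments VIso {S} P Q.
Arguments IsPullback {S A B} c Q R lam.
Arguments IsPushforward {S A B} c P R kap.

(* Pushforwards and pullbacks are unique up to vertical isomorphism, so it is
   enough to show that k1 (x) k2 is opcartesian and that k \ l and l / k are
   cartesian whenever k is opcartesian and l cartesian.  Each of these maps
   factors as a composite of two whiskerings, and (op)cartesian maps compose.
   A whiskering inherits its universal property by transposing derivations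
   across the closed structure, which t preserves strictly: - (x) Q has the right
   adjoint - / Q, and P \ - is a right adjoint; for the contravariant argument,
   a derivation W ==> R \ Z transposes to R ==> Z / W, so the universal property
   of the opcartesian k : P -> R becomes that of the cartesian k \ Z. *)
From Stdlib Require Import Eqdep.

Lemma HomEq_endpoints {C : Cat} {A B A' B' : C} (f : hom A B) (f' : hom A' B') :
  HomEq f f' -> A = A' /\ B = B'.
Proof.
  intro H; apply (f_equal (@projT1 _ _)) in H.
  split; [apply (f_equal fst) in H | apply (f_equal snd) in H]; exact H.
Qed.

Lemma HomEq_eq {C : Cat} {A B : C} (f g : hom A B) : HomEq f g -> f = g.
Proof. exact (inj_pair2 _ (fun p : C * C => hom (fst p) (snd p)) (A, B) f g). Qed.

(* Needs the endpoints and the arrow on the right of [H] to be variables. *)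
Ltac homeq_subst H :=
  let e1 := fresh in let e2 := fresh in
  destruct (HomEq_endpoints _ _ H) as [e1 e2]; subst; apply HomEq_eq in H; subst.

Lemma tensm_split {C : Cat} (M : Monoidal C) {A A' B B' : C} (f : hom A A') (g : hom B B') :
  tensm M f g = comp (tensm M f (idc B)) (tensm M (idc A') g).
Proof. rewrite <- tensm_comp, comp_id_l, comp_id_r; reflexivity. Qed.

Section ClosedCalculus.
Context {C : Cat} {M : Monoidal C} (K : Closed M).

Lemma lresm_split {X X' Z Z' : C} (f : hom X' X) (k : hom Z Z') :
  lresm K f k = comp (lresm K f (idc Z)) (lresm K (idc X') k).
Proof. rewrite <- lresm_comp, comp_id_l, comp_id_l; reflexivity. Qed.

Lemma rresm_split {Z Z' Y Y' : C} (k : hom Z Z') (g : hom Y' Y) :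
  rresm K k g = comp (rresm K (idc Z) g) (rresm K k (idc Y')).
Proof. rewrite <- rresm_comp, comp_id_l, comp_id_l; reflexivity. Qed.

Lemma luncurry_inj {X Y Z : C} (g g' : hom Y (lres K X Z)) :
  luncurry K g = luncurry K g' -> g = g'.
Proof. intro H; rewrite <- (lcurry_luncurry g), H; apply lcurry_luncurry. Qed.

Lemma runcurry_inj {X Y Z : C} (g g' : hom X (rres K Z Y)) :
  runcurry K g = runcurry K g' -> g = g'.
Proof. intro H; rewrite <- (rcurry_runcurry g), H; apply rcurry_runcurry. Qed.

Lemma lcurry_pre {X Y Y' Z : C} (g : hom Y' Y) (h : hom (tens M X Y) Z) :
  lcurry K (comp (tensm M (idc X) g) h) = comp g (lcurry K h).
Proof.
  pose proof (lcurry_nat K (idc X) g h (idc Z)) as H.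
  rewrite comp_id_r, lresm_id, comp_id_r in H; exact H.
Qed.

Lemma rcurry_pre {X X' Y Z : C} (f : hom X' X) (h : hom (tens M X Y) Z) :
  rcurry K (comp (tensm M f (idc Y)) h) = comp f (rcurry K h).
Proof.
  pose proof (rcurry_nat K f (idc Y) h (idc Z)) as H.
  rewrite comp_id_r, rresm_id, comp_id_r in H; exact H.
Qed.

Lemma luncurry_pre {X Y Y' Z : C} (g : hom Y' Y) (u : hom Y (lres K X Z)) :
  luncurry K (comp g u) = comp (tensm M (idc X) g) (luncurry K u).
Proof.
  transitivity (luncurry K (lcurry K (comp (tensm M (idc X) g) (luncurry K u)))).
  - rewrite lcurry_pre, lcurry_luncurry; reflexivity.
  - apply luncurry_lcurry.
Qed.

Lemma runcurry_pre {X X' Y Z : C} (f : hom X' X) (u : hom X (rres K Z Y)) :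
  runcurry K (comp f u) = comp (tensm M f (idc Y)) (runcurry K u).
Proof.
  transitivity (runcurry K (rcurry K (comp (tensm M f (idc Y)) (runcurry K u)))).
  - rewrite rcurry_pre, rcurry_runcurry; reflexivity.
  - apply runcurry_rcurry.
Qed.

Lemma luncurry_comp_lresm {X X' Y Z Z' : C} (g : hom Y (lres K X Z)) (f : hom X' X)
  (k : hom Z Z') :
  luncurry K (comp g (lresm K f k)) = comp (tensm M f (idc Y)) (comp (luncurry K g) k).
Proof.
  transitivity (luncurry K (lcurry K (comp (tensm M f (idc Y)) (comp (luncurry K g) k)))).
  - rewrite lcurry_nat, lcurry_luncurry, comp_id_l; reflexivity.
  - apply luncurry_lcurry.
Qed.

Lemma runcurry_comp_rresm {X Y Y' Z Z' : C} (g : hom X (rres K Z Y)) (f : hom Y' Y)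
  (k : hom Z Z') :
  runcurry K (comp g (rresm K k f)) = comp (tensm M (idc X) f) (comp (runcurry K g) k).
Proof.
  transitivity (runcurry K (rcurry K (comp (tensm M (idc X) f) (comp (runcurry K g) k)))).
  - rewrite rcurry_nat, rcurry_runcurry, comp_id_l; reflexivity.
  - apply runcurry_rcurry.
Qed.

Lemma lcurry_def {X Y Z : C} (h : hom (tens M X Y) Z) :
  lcurry K h = comp (lcoev K X Y) (lresm K (idc X) h).
Proof.
  pose proof (lcurry_nat K (idc X) (idc Y) (idc (tens M X Y)) h) as H.
  rewrite tensm_id, !comp_id_l in H; exact H.
Qed.

Lemma rcurry_def {X Y Z : C} (h : hom (tens M X Y) Z) :
  rcurry K h = comp (rcoev K X Y) (rresm K h (idc Y)).
Proof.
  pose proof (rcurry_nat K (idc X) (idc Y) (idc (tens M X Y)) h) as H.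
  rewrite tensm_id, !comp_id_l in H; exact H.
Qed.

Lemma luncurry_def {X Y Z : C} (g : hom Y (lres K X Z)) :
  luncurry K g = comp (tensm M (idc X) g) (lev K X Z).
Proof. unfold lev; rewrite <- luncurry_pre, comp_id_r; reflexivity. Qed.

Lemma runcurry_def {X Y Z : C} (g : hom X (rres K Z Y)) :
  runcurry K g = comp (tensm M g (idc Y)) (rev K Z Y).
Proof. unfold rev; rewrite <- runcurry_pre, comp_id_r; reflexivity. Qed.

End ClosedCalculus.

Section Refinement.
Context {S : CMRS}.

Lemma Over_id (X : cD S) : Over (idc X) (idc (rt S X)).
Proof. unfold Over; rewrite fmap_id; reflexivity. Qed.

Lemma Over_comp {P Q R : cD S} {f : hom P Q} {g : hom Q R} {A B E : cT S}
  {c : hom A B} {d : hom B E} :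
  Over f c -> Over g d -> Over (comp f g) (comp c d).
Proof. intros Hf Hg; homeq_subst Hf; homeq_subst Hg; unfold Over; rewrite fmap_comp; reflexivity. Qed.

Lemma Over_comp_idc {P Q R : cD S} {f : hom P Q} {g : hom Q R} {A : cT S} :
  Over f (idc A) -> Over g (idc A) -> Over (comp f g) (idc A).
Proof. intros Hf Hg; rewrite <- (comp_id_l (idc A)); exact (Over_comp Hf Hg). Qed.

Lemma Over_tensm {P P' Q Q' : cD S} {a : hom P P'} {b : hom Q Q'} {A A' B B' : cT S}
  {c : hom A A'} {d : hom B B'} :
  Over a c -> Over b d -> Over (tensm (mD S) a b) (tensm (mT S) c d).
Proof. intros Ha Hb; homeq_subst Ha; homeq_subst Hb; apply t_tensm. Qed.

Lemma Over_lresm {P P' R R' : cD S} {a : hom P' P} {b : hom R R'} {A A' C C' : cT S}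
  {c : hom A' A} {d : hom C C'} :
  Over a c -> Over b d -> Over (lresm (kD S) a b) (lresm (kT S) c d).
Proof. intros Ha Hb; homeq_subst Ha; homeq_subst Hb; apply t_lresm. Qed.

Lemma Over_rresm {R R' Q Q' : cD S} {a : hom R R'} {b : hom Q' Q} {C C' B B' : cT S}
  {c : hom C C'} {d : hom B' B} :
  Over a c -> Over b d -> Over (rresm (kD S) a b) (rresm (kT S) c d).
Proof. intros Ha Hb; homeq_subst Ha; homeq_subst Hb; apply t_rresm. Qed.

Lemma Over_lcurry {X Y Z : cD S} {h : hom (tens (mD S) X Y) Z} {Z' : cT S}
  {h' : hom (tens (mT S) (rt S X) (rt S Y)) Z'} :
  Over h h' -> Over (lcurry (kD S) h) (lcurry (kT S) h').
Proof. intro H; rewrite !lcurry_def; exact (Over_comp (t_lcoev X Y) (Over_lresm (Over_id X) H)). Qed.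

Lemma Over_rcurry {X Y Z : cD S} {h : hom (tens (mD S) X Y) Z} {Z' : cT S}
  {h' : hom (tens (mT S) (rt S X) (rt S Y)) Z'} :
  Over h h' -> Over (rcurry (kD S) h) (rcurry (kT S) h').
Proof. intro H; rewrite !rcurry_def; exact (Over_comp (t_rcoev X Y) (Over_rresm H (Over_id Y))). Qed.

Lemma Over_luncurry {X Y Z : cD S} {g : hom Y (lres (kD S) X Z)} {Y' : cT S}
  {g' : hom Y' (lres (kT S) (rt S X) (rt S Z))} :
  Over g g' -> Over (luncurry (kD S) g) (luncurry (kT S) g').
Proof. intro H; rewrite !luncurry_def; exact (Over_comp (Over_tensm (Over_id X) H) (t_lev X Z)). Qed.

Lemma Over_runcurry {X Y Z : cD S} {g : hom X (rres (kD S) Z Y)} {X' : cT S}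
  {g' : hom X' (rres (kT S) (rt S Z) (rt S Y))} :
  Over g g' -> Over (runcurry (kD S) g) (runcurry (kT S) g').
Proof. intro H; rewrite !runcurry_def; exact (Over_comp (Over_tensm H (Over_id Y)) (t_rev Z Y)). Qed.

Lemma pushforward_ext {A B Y : cT S} {c : hom A B} {P R Q : cD S} {kap : hom P R}
  {d : hom B Y} {f g : hom R Q} :
  IsPushforward c P R kap -> Over f d -> Over g d -> comp kap f = comp kap g -> f = g.
Proof.
  intros [_ [_ [Hkap U]]] Hf Hg Hfg.
  destruct (HomEq_endpoints _ _ Hf) as [_ rQ].
  destruct (U _ _ d rQ _ (Over_comp Hkap Hf)) as [x [_ Ux]].
  transitivity x; [symmetry|]; apply Ux; split; auto.
Qed.

Lemma pullback_ext {A B X : cT S} {c : hom A B} {Q R P : cD S} {lam : hom R Q}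
  {d : hom X A} {f g : hom P R} :
  IsPullback c Q R lam -> Over f d -> Over g d -> comp f lam = comp g lam -> f = g.
Proof.
  intros [_ [_ [Hlam U]]] Hf Hg Hfg.
  destruct (HomEq_endpoints _ _ Hf) as [rP _].
  destruct (U _ _ d rP _ (Over_comp Hf Hlam)) as [x [_ Ux]].
  transitivity x; [symmetry|]; apply Ux; split; auto.
Qed.


Lemma pushforward_viso {A B : cT S} {c : hom A B} {P R R' : cD S}
  {kap : hom P R} {kap' : hom P R'} :
  IsPushforward c P R kap -> IsPushforward c P R' kap' -> VIso R R'.
Proof.
  intros HR HR'.
  pose proof HR as [_ [rR [Hkap U]]]; pose proof HR' as [_ [rR' [Hkap' U']]].
  unfold refines in rR, rR'; subst B.
  rewrite <- (comp_id_r c) in Hkap, Hkap'.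
  destruct (U _ _ _ rR' _ Hkap') as [f [[Hf Ef] _]].
  destruct (U' _ _ _ eq_refl _ Hkap) as [g [[Hg Eg] _]].
  exists f, g; split; [|split; [|exact Hf]].
  - apply (pushforward_ext HR (Over_comp_idc Hf Hg) (Over_id R)).
    rewrite <- comp_assoc, Ef, Eg, comp_id_r; reflexivity.
  - apply (pushforward_ext HR' (Over_comp_idc Hg Hf)); [rewrite <- rR'; apply Over_id |].
    rewrite <- comp_assoc, Eg, Ef, comp_id_r; reflexivity.
Qed.

Lemma pullback_viso {A B : cT S} {c : hom A B} {Q R R' : cD S}
  {lam : hom R Q} {lam' : hom R' Q} :
  IsPullback c Q R lam -> IsPullback c Q R' lam' -> VIso R R'.
Proof.
  intros HR HR'.
  pose proof HR as [_ [rR [Hlam U]]]; pose proof HR' as [_ [rR' [Hlam' U']]].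
  unfold refines in rR, rR'; subst A.
  rewrite <- (comp_id_l c) in Hlam, Hlam'.
  destruct (U' _ _ _ eq_refl _ Hlam) as [f [[Hf Ef] _]].
  destruct (U _ _ _ rR' _ Hlam') as [g [[Hg Eg] _]].
  exists f, g; split; [|split; [|exact Hf]].
  - apply (pullback_ext HR (Over_comp_idc Hf Hg) (Over_id R)).
    rewrite comp_assoc, Eg, Ef, comp_id_l; reflexivity.
  - apply (pullback_ext HR' (Over_comp_idc Hg Hf)); [rewrite <- rR'; apply Over_id |].
    rewrite comp_assoc, Ef, Eg, comp_id_l; reflexivity.
Qed.


Lemma pushforward_comp {A B B' : cT S} {c : hom A B} {c' : hom B B'} {P R R' : cD S}
  {k : hom P R} {k' : hom R R'} :
  IsPushforward c P R k -> IsPushforward c' R R' k' -> IsPushforward (comp c c') P R' (comp k k').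
Proof.
  intros [rP [_ [Hk U]]] [_ [rR' [Hk' U']]].
  split; [exact rP | split; [exact rR' | split; [exact (Over_comp Hk Hk') |]]].
  intros Y Q d rQ beta Hbeta; rewrite comp_assoc in Hbeta.
  destruct (U _ _ _ rQ _ Hbeta) as [a [[Ha Ea] Ua]].
  destruct (U' _ _ _ rQ _ Ha) as [a' [[Ha' Ea'] Ua']].
  exists a'; split; [split; [exact Ha' | rewrite comp_assoc, Ea'; exact Ea] |].
  intros phi [Hphi Ephi]; apply Ua'; split; [exact Hphi |].
  symmetry; apply Ua; split; [exact (Over_comp Hk' Hphi) | rewrite <- comp_assoc; exact Ephi].
Qed.

Lemma pullback_comp {A' A B : cT S} {c' : hom A' A} {c : hom A B} {Q R R' : cD S}
  {l : hom R Q} {l' : hom R' R} :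
  IsPullback c Q R l -> IsPullback c' R R' l' -> IsPullback (comp c' c) Q R' (comp l' l).
Proof.
  intros [rQ [_ [Hl U]]] [_ [rR' [Hl' U']]].
  split; [exact rQ | split; [exact rR' | split; [exact (Over_comp Hl' Hl) |]]].
  intros X P d rP beta Hbeta; rewrite <- comp_assoc in Hbeta.
  destruct (U _ _ _ rP _ Hbeta) as [a [[Ha Ea] Ua]].
  destruct (U' _ _ _ rP _ Ha) as [a' [[Ha' Ea'] Ua']].
  exists a'; split; [split; [exact Ha' | rewrite <- comp_assoc, Ea'; exact Ea] |].
  intros phi [Hphi Ephi]; apply Ua'; split; [exact Hphi |].
  symmetry; apply Ua; split; [exact (Over_comp Hphi Hl') | rewrite comp_assoc; exact Ephi].
Qed.

Lemma pushforward_tensm_idr {A A' B : cT S} {c : hom A A'} {P R : cD S} {k : hom P R}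
  (Q : cD S) :
  IsPushforward c P R k -> refines Q B ->
  IsPushforward (tensm (mT S) c (idc B)) (tens (mD S) P Q) (tens (mD S) R Q)
    (tensm (mD S) k (idc Q)).
Proof.
  intros [rP [rR [Hk U]]] rQ; unfold refines in *; subst A A' B.
  split; [apply t_tens | split; [apply t_tens | split; [exact (Over_tensm Hk (Over_id Q)) |]]].
  intros Y Z e rZ beta Hbeta; unfold refines in rZ; subst Y.
  assert (Hbeta' : Over (rcurry (kD S) beta) (comp c (rcurry (kT S) e))).
  { rewrite <- rcurry_pre; exact (Over_rcurry Hbeta). }
  destruct (U _ _ _ (t_rres Z Q) _ Hbeta') as [a [[Ha Ea] Ua]].
  exists (runcurry (kD S) a); split; [split |].
  - rewrite <- (runcurry_rcurry (kT S) e); exact (Over_runcurry Ha).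
  - rewrite <- runcurry_pre, Ea; apply runcurry_rcurry.
  - intros phi [Hphi Ephi].
    rewrite <- (runcurry_rcurry (kD S) phi); f_equal; apply Ua; split.
    + exact (Over_rcurry Hphi).
    + rewrite <- rcurry_pre, Ephi; reflexivity.
Qed.

Lemma pushforward_tensm_idl {B B' A : cT S} {d : hom B B'} {Q R : cD S} {k : hom Q R}
  (P : cD S) :
  refines P A -> IsPushforward d Q R k ->
  IsPushforward (tensm (mT S) (idc A) d) (tens (mD S) P Q) (tens (mD S) P R)
    (tensm (mD S) (idc P) k).
Proof.
  intros rP [rQ [rR [Hk U]]]; unfold refines in *; subst A B B'.
  split; [apply t_tens | split; [apply t_tens | split; [exact (Over_tensm (Over_id P) Hk) |]]].
  intros Y Z e rZ beta Hbeta; unfold refines in rZ; subst Y.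
  assert (Hbeta' : Over (lcurry (kD S) beta) (comp d (lcurry (kT S) e))).
  { rewrite <- lcurry_pre; exact (Over_lcurry Hbeta). }
  destruct (U _ _ _ (t_lres P Z) _ Hbeta') as [a [[Ha Ea] Ua]].
  exists (luncurry (kD S) a); split; [split |].
  - rewrite <- (luncurry_lcurry (kT S) e); exact (Over_luncurry Ha).
  - rewrite <- luncurry_pre, Ea; apply luncurry_lcurry.
  - intros phi [Hphi Ephi].
    rewrite <- (luncurry_lcurry (kD S) phi); f_equal; apply Ua; split.
    + exact (Over_lcurry Hphi).
    + rewrite <- lcurry_pre, Ephi; reflexivity.
Qed.


Lemma pullback_lresm_idl {C' C A : cT S} {d : hom C' C} {R R' : cD S} {l : hom R' R}
  (X : cD S) :
  refines X A -> IsPullback d R R' l ->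
  IsPullback (lresm (kT S) (idc A) d) (lres (kD S) X R) (lres (kD S) X R')
    (lresm (kD S) (idc X) l).
Proof.
  intros rX [rR [rR' [Hl U]]]; unfold refines in *; subst A C C'.
  split; [apply t_lres | split; [apply t_lres | split; [exact (Over_lresm (Over_id X) Hl) |]]].
  intros Y W e rW beta Hbeta; unfold refines in rW; subst Y.
  assert (Hbeta' : Over (luncurry (kD S) beta) (comp (luncurry (kT S) e) d)).
  { pose proof (Over_luncurry Hbeta) as H.
    rewrite luncurry_comp_lresm, tensm_id, comp_id_l in H; exact H. }
  destruct (U _ _ _ (t_tens X W) _ Hbeta') as [a [[Ha Ea] Ua]].
  exists (lcurry (kD S) a); split; [split |].
  - rewrite <- (lcurry_luncurry e); exact (Over_lcurry Ha).
  - apply luncurry_inj.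
    rewrite luncurry_comp_lresm, tensm_id, comp_id_l, luncurry_lcurry; exact Ea.
  - intros phi [Hphi Ephi].
    rewrite <- (lcurry_luncurry phi); f_equal; apply Ua; split.
    + exact (Over_luncurry Hphi).
    + rewrite <- Ephi, luncurry_comp_lresm, tensm_id, comp_id_l; reflexivity.
Qed.

Lemma pullback_rresm_idr {C' C B : cT S} {d : hom C' C} {R R' : cD S} {l : hom R' R}
  (Y : cD S) :
  refines Y B -> IsPullback d R R' l ->
  IsPullback (rresm (kT S) d (idc B)) (rres (kD S) R Y) (rres (kD S) R' Y)
    (rresm (kD S) l (idc Y)).
Proof.
  intros rY [rR [rR' [Hl U]]]; unfold refines in *; subst B C C'.
  split; [apply t_rres | split; [apply t_rres | split; [exact (Over_rresm Hl (Over_id Y)) |]]].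
  intros X W e rW beta Hbeta; unfold refines in rW; subst X.
  assert (Hbeta' : Over (runcurry (kD S) beta) (comp (runcurry (kT S) e) d)).
  { pose proof (Over_runcurry Hbeta) as H.
    rewrite runcurry_comp_rresm, tensm_id, comp_id_l in H; exact H. }
  destruct (U _ _ _ (t_tens W Y) _ Hbeta') as [a [[Ha Ea] Ua]].
  exists (rcurry (kD S) a); split; [split |].
  - rewrite <- (rcurry_runcurry e); exact (Over_rcurry Ha).
  - apply runcurry_inj.
    rewrite runcurry_comp_rresm, tensm_id, comp_id_l, runcurry_rcurry; exact Ea.
  - intros phi [Hphi Ephi].
    rewrite <- (rcurry_runcurry phi); f_equal; apply Ua; split.
    + exact (Over_runcurry Hphi).
    + rewrite <- Ephi, runcurry_comp_rresm, tensm_id, comp_id_l; reflexivity.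
Qed.

Lemma pullback_lresm_idr {A A' C : cT S} {c : hom A A'} {P R : cD S} {k : hom P R}
  (Z : cD S) :
  IsPushforward c P R k -> refines Z C ->
  IsPullback (lresm (kT S) c (idc C)) (lres (kD S) P Z) (lres (kD S) R Z)
    (lresm (kD S) k (idc Z)).
Proof.
  intros [rP [rR [Hk U]]] rZ; unfold refines in *; subst A A' C.
  split; [apply t_lres | split; [apply t_lres | split; [exact (Over_lresm Hk (Over_id Z)) |]]].
  intros Y W e rW beta Hbeta; unfold refines in rW; subst Y.
  assert (Hbeta' : Over (rcurry (kD S) (luncurry (kD S) beta))
                        (comp c (rcurry (kT S) (luncurry (kT S) e)))).
  { pose proof (Over_rcurry (Over_luncurry Hbeta)) as H.
    rewrite luncurry_comp_lresm, comp_id_r, rcurry_pre in H; exact H. }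
  destruct (U _ _ _ (t_rres Z W) _ Hbeta') as [a [[Ha Ea] Ua]].
  exists (lcurry (kD S) (runcurry (kD S) a)); split; [split |].
  - rewrite <- (lcurry_luncurry e), <- (runcurry_rcurry (kT S) (luncurry (kT S) e)).
    exact (Over_lcurry (Over_runcurry Ha)).
  - apply luncurry_inj.
    rewrite luncurry_comp_lresm, comp_id_r, luncurry_lcurry, <- runcurry_pre, Ea.
    apply runcurry_rcurry.
  - intros phi [Hphi Ephi].
    rewrite <- (lcurry_luncurry phi), <- (runcurry_rcurry (kD S) (luncurry (kD S) phi)).
    do 2 f_equal; apply Ua; split.
    + exact (Over_rcurry (Over_luncurry Hphi)).
    + rewrite <- Ephi, luncurry_comp_lresm, comp_id_r, rcurry_pre; reflexivity.
Qed.

Lemma pullback_rresm_idl {B B' C : cT S} {c : hom B B'} {Q R : cD S} {k : hom Q R}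
  (Z : cD S) :
  refines Z C -> IsPushforward c Q R k ->
  IsPullback (rresm (kT S) (idc C) c) (rres (kD S) Z Q) (rres (kD S) Z R)
    (rresm (kD S) (idc Z) k).
Proof.
  intros rZ [rQ [rR [Hk U]]]; unfold refines in *; subst B B' C.
  split; [apply t_rres | split; [apply t_rres | split; [exact (Over_rresm (Over_id Z) Hk) |]]].
  intros Y W e rW beta Hbeta; unfold refines in rW; subst Y.
  assert (Hbeta' : Over (lcurry (kD S) (runcurry (kD S) beta))
                        (comp c (lcurry (kT S) (runcurry (kT S) e)))).
  { pose proof (Over_lcurry (Over_runcurry Hbeta)) as H.
    rewrite runcurry_comp_rresm, comp_id_r, lcurry_pre in H; exact H. }
  destruct (U _ _ _ (t_lres W Z) _ Hbeta') as [a [[Ha Ea] Ua]].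
  exists (rcurry (kD S) (luncurry (kD S) a)); split; [split |].
  - rewrite <- (rcurry_runcurry e), <- (luncurry_lcurry (kT S) (runcurry (kT S) e)).
    exact (Over_rcurry (Over_luncurry Ha)).
  - apply runcurry_inj.
    rewrite runcurry_comp_rresm, comp_id_r, runcurry_rcurry, <- luncurry_pre, Ea.
    apply luncurry_lcurry.
  - intros phi [Hphi Ephi].
    rewrite <- (rcurry_runcurry phi), <- (luncurry_lcurry (kD S) (runcurry (kD S) phi)).
    do 2 f_equal; apply Ua; split.
    + exact (Over_lcurry (Over_runcurry Hphi)).
    + rewrite <- Ephi, runcurry_comp_rresm, comp_id_r, lcurry_pre; reflexivity.
Qed.


Lemma pushforward_tensm {A A' B B' : cT S} {c : hom A A'} {d : hom B B'} {P Q R R' : cD S}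
  {k : hom P R} {k' : hom Q R'} :
  IsPushforward c P R k -> IsPushforward d Q R' k' ->
  IsPushforward (tensm (mT S) c d) (tens (mD S) P Q) (tens (mD S) R R') (tensm (mD S) k k').
Proof.
  intros Hk Hk'; rewrite (tensm_split (mT S) c d), (tensm_split (mD S) k k').
  exact (pushforward_comp (pushforward_tensm_idr Q Hk (proj1 Hk'))
                          (pushforward_tensm_idl R (proj1 (proj2 Hk)) Hk')).
Qed.

Lemma pullback_lresm {A A' C' C : cT S} {c : hom A A'} {d : hom C' C} {P P' R R' : cD S}
  {k : hom P P'} {l : hom R' R} :
  IsPushforward c P P' k -> IsPullback d R R' l ->
  IsPullback (lresm (kT S) c d) (lres (kD S) P R) (lres (kD S) P' R') (lresm (kD S) k l).
Proof.
  intros Hk Hl; rewrite (lresm_split (kT S) c d), (lresm_split (kD S) k l).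
  exact (pullback_comp (pullback_lresm_idl P (proj1 Hk) Hl)
                       (pullback_lresm_idr R' Hk (proj1 (proj2 Hl)))).
Qed.

Lemma pullback_rresm {B B' C' C : cT S} {c : hom B B'} {d : hom C' C} {Q Q' R R' : cD S}
  {k : hom Q Q'} {l : hom R' R} :
  IsPullback d R R' l -> IsPushforward c Q Q' k ->
  IsPullback (rresm (kT S) d c) (rres (kD S) R Q) (rres (kD S) R' Q') (rresm (kD S) l k).
Proof.
  intros Hl Hk; rewrite (rresm_split (kT S) d c), (rresm_split (kD S) l k).
  exact (pullback_comp (pullback_rresm_idr Q (proj1 Hk) Hl)
                       (pullback_rresm_idl R' (proj1 (proj2 Hl)) Hk)).
Qed.

End Refinement.

Theorem proposition2p4 (S : CMRS) :
  (* (a)  (c (x) d)_!(P (x) Q) ≅ c_!P (x) d_!Q *)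
  (forall (A A' B B' : cT S) (c : hom A A') (d : hom B B') (P Q : cD S),
     refines P A -> refines Q B ->
     forall (cP : cD S) (k1 : hom P cP), IsPushforward c P cP k1 ->
     forall (dQ : cD S) (k2 : hom Q dQ), IsPushforward d Q dQ k2 ->
     forall (E : cD S) (k3 : hom (tens (mD S) P Q) E),
       IsPushforward (tensm (mT S) c d) (tens (mD S) P Q) E k3 ->
     VIso E (tens (mD S) cP dQ))
  /\
  (* (b)  (c_!P) \ (d^*R) ≅ (c\d)^*(P\R) *)
  (forall (A A' C C' : cT S) (c : hom A A') (d : hom C' C) (P R : cD S),
     refines P A -> refines R C ->
     forall (cP : cD S) (k : hom P cP), IsPushforward c P cP k ->
     forall (dR : cD S) (l : hom dR R), IsPullback d R dR l ->
     forall (E : cD S) (l2 : hom E (lres (kD S) P R)),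
       IsPullback (lresm (kT S) c d) (lres (kD S) P R) E l2 ->
     VIso (lres (kD S) cP dR) E)
  /\
  (* (c)  (d^*R) / (c_!Q) ≅ (d/c)^*(R/Q) *)
  (forall (B B' C C' : cT S) (c : hom B B') (d : hom C' C) (Q R : cD S),
     refines Q B -> refines R C ->
     forall (dR : cD S) (l : hom dR R), IsPullback d R dR l ->
     forall (cQ : cD S) (k : hom Q cQ), IsPushforward c Q cQ k ->
     forall (E : cD S) (l2 : hom E (rres (kD S) R Q)),
       IsPullback (rresm (kT S) d c) (rres (kD S) R Q) E l2 ->
     VIso (rres (kD S) dR cQ) E).
Proof.
  split; [|split].
  - intros A A' B B' c d P Q _ _ cP k1 Hk1 dQ k2 Hk2 E k3 Hk3.
    exact (pushforward_viso Hk3 (pushforward_tensm Hk1 Hk2)).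
  - intros A A' C C' c d P R _ _ cP k Hk dR l Hl E l2 Hl2.
    exact (pullback_viso (pullback_lresm Hk Hl) Hl2).
  - intros B B' C C' c d Q R _ _ dR l Hl cQ k Hk E l2 Hl2.
    exact (pullback_viso (pullback_rresm Hl Hk) Hl2).
Qed.
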